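(* Let $\mathbb{H}$ be the real quaternion algebra and let $p\in\mathbb{R}[x]$ be a nonconstant polynomial. Then every element of $\mathbb{H}$ can be expressed as a product $xy$ of two elements $x,y\in p[\mathbb{H},\mathbb{H}]=\{p(ab)-p(ba)\mid a,b\in\mathbb{H}\}$. *)

From mathcomp Require Import all_boot all_order all_algebra.
From mathcomp Require Import reals.
Set Implicit Arguments. Unset Strict Implicit. Unset Printing Implicit Defensive.
Import GRing.Theory Num.Theory.
Local Open Scope ring_scope.

Section Quat.
Variable R : realType.

(* q = q0 + q1 i + q2 j + q3 k *)
Record quat := Quat { q0 : R; q1 : R; q2 : R; q3 : R }.

Definition qzero : quat := Quat 0 0 0 0.
Definition qone : quat := Quat 1 0 0 0.
Definition qadd (x y : quat) : quat :=
  Quat (q0 x + q0 y) (q1 x + q1 y) (q2 x + q2 y) (q3 x + q3 y).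
Definition qopp (x : quat) : quat := Quat (- q0 x) (- q1 x) (- q2 x) (- q3 x).
Definition qsub (x y : quat) : quat := qadd x (qopp y).
Definition qscale (c : R) (x : quat) : quat :=
  Quat (c * q0 x) (c * q1 x) (c * q2 x) (c * q3 x).
(* Hamilton product, i^2 = j^2 = k^2 = ijk = -1 *)
Definition qmul (x y : quat) : quat :=
  Quat (q0 x * q0 y - q1 x * q1 y - q2 x * q2 y - q3 x * q3 y)
       (q0 x * q1 y + q1 x * q0 y + q2 x * q3 y - q3 x * q2 y)
       (q0 x * q2 y - q1 x * q3 y + q2 x * q0 y + q3 x * q1 y)
       (q0 x * q3 y + q1 x * q2 y - q2 x * q1 y + q3 x * q0 y).
Fixpoint qpow (x : quat) (n : nat) : quat :=
  match n with 0 => qone | n'.+1 => qmul x (qpow x n') end.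

Definition qeval (p : {poly R}) (x : quat) : quat :=
  foldr qadd qzero [seq qscale p`_i (qpow x i) | i <- iota 0 (size p)].

Definition in_pcomm (p : {poly R}) (x : quat) : Prop :=
  exists a b : quat, x = qsub (qeval p (qmul a b)) (qeval p (qmul b a)).
End Quat.

From HB Require Import structures.
From mathcomp Require Import all_boot all_order all_algebra.
From mathcomp Require Import reals polyorder polyrcf ring.
Set Implicit Arguments. Unset Strict Implicit. Unset Printing Implicit Defensive.
Import Order.TTheory GRing.Theory Num.Theory.
Local Open Scope ring_scope.

(* Every quaternion q is a product of two pure quaternions: if x is pure,
   nonzero and orthogonal to the vector part of q, then x^-1 q is pure.  So it
   suffices to put every pure u in p[H,H].  A pure a orthogonal to u
   anticommutes with u, so conjugation by a exchanges s + z and s - z for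
   z := t u, i.e. s + z = ab and s - z = ba for suitable a, b.  Writing
   p(X + s) = E(X^2) + X O(X^2) and using z^2 = -|u|^2 t^2, we get
   p(ab) - p(ba) = 2 t O(-|u|^2 t^2) u.  When O <> 0 the real polynomial
   t |-> 2 t O(-|u|^2 t^2) has odd degree, so it takes the value 1; and O <> 0
   as soon as p'(s) <> 0, since p'(s) is the coefficient of X in p(X + s). *)

Section HornerAlg.
Variables (R : comNzRingType) (A : algType R).
Implicit Types (z : A) (p q : {poly R}).

Lemma horner_algE z p : horner_alg z p = \sum_(i < size p) p`_i *: z ^+ i.
Proof.
rewrite /horner_alg /horner_morph (horner_coef_wide _ (size_poly _ _)).
by apply: eq_bigr => i _; rewrite coef_map /= mulr_algl.
Qed.

Lemma horner_alg_comp z p q :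
  horner_alg z (p \Po q) = horner_alg (horner_alg z q) p.
Proof.
rewrite comp_polyE [RHS]horner_algE linear_sum.
by apply: eq_bigr => i _; rewrite linearZ rmorphXn /= mulr_algl.
Qed.

Lemma horner_alg_shift z (c : R) p :
  horner_alg (c%:A + z) p = horner_alg z (p \Po ('X + c%:P)).
Proof. by rewrite horner_alg_comp rmorphD /= horner_algX horner_algC addrC. Qed.

Lemma horner_alg_scalar (c : R) p : horner_alg (c%:A : A) p = p.[c]%:A.
Proof. exact: horner_map. Qed.

Lemma horner_alg_subN z (c : R) p : z * z = c%:A ->
  horner_alg z p - horner_alg (- z) p = (2 * (odd_poly p).[c]) *: z.
Proof.
move=> zz; rewrite -[in LHS](poly_even_odd p) !rmorphD !rmorphM /=.
rewrite !horner_alg_comp !rmorphXn /= !horner_algX sqrrN expr2 zz.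
rewrite !horner_alg_scalar !mulr_algl scalerN opprD opprK addrACA subrr add0r.
by rewrite -scalerDl mulr2n mulrDl mul1r.
Qed.

End HornerAlg.

Lemma coef1_comp_XaddC (R : comNzRingType) (p : {poly R}) (s : R) :
  (p \Po ('X + s%:P))`_1 = p^`().[s].
Proof.
have := coef_deriv (p \Po ('X + s%:P)) 0.
rewrite deriv_comp derivD derivX derivC addr0 mulr1 mulr1n => <-.
by rewrite -horner_coef0 horner_comp hornerD hornerX hornerC add0r.
Qed.

Section RealClosedPolynomials.
Variable R : rcfType.
Implicit Types (p P : {poly R}).

Lemma exists_shift_odd_poly_neq0 p : (1 < size p)%N ->
  exists s, odd_poly (p \Po ('X + s%:P)) != 0.
Proof.
move=> p_nc; have dp : p^`() != 0.
  by rewrite -size_poly_gt0 size_deriv -ltnS prednK // ltnW.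
set s := cauchy_bound p^`(); exists s.
have : ~~ root p^`() s by apply: ge_cauchy_bound; rewrite // in_itv /= lexx.
apply: contraNneq => O0.
by rewrite rootE -coef1_comp_XaddC -(coef_odd_poly _ 0) O0 coef0.
Qed.

Lemma odd_deg_poly_surj P y :
  (0 < size P)%N -> ~~ odd (size P) -> exists t, P.[t] = y.
Proof.
move=> P_gt0 P_even.
have P_gt1 : (1 < size P)%N by case: (size P) P_gt0 P_even => [|[]].
have sP : size (P - y%:P) = size P.
  by rewrite size_polyDl // size_polyN (leq_ltn_trans (size_polyC_leq1 _)).
have [t /rootP] : {t | root (P - y%:P) t} by apply: odd_poly_root; rewrite sP.
by rewrite hornerD hornerN hornerC => /subr0_eq; exists t.
Qed.

Lemma exists_mulX_comp_sqr_eq1 P (c : R) : P != 0 -> c != 0 ->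
  exists t, 2 * P.[c * t ^+ 2] * t = 1.
Proof.
move=> P0 c0; pose Q := (P \Po (c *: 'X^2)) * 'X.
have sX2 : size (c *: 'X^2 : {poly R}) = 3 by rewrite size_scale // size_polyXn.
have sC : size (P \Po (c *: 'X^2)) = (size P).-1.*2.+1.
  have := size_comp_poly P (c *: 'X^2); rewrite sX2 muln2 => <-.
  by rewrite prednK // size_poly_gt0 comp_poly_eq0 // sX2.
have sQ : size Q = (size P).-1.*2.+2.
  by rewrite size_mulX ?sC // -size_poly_gt0 sC.
have [||t Qt] := @odd_deg_poly_surj Q 2^-1; rewrite ?sQ //= ?odd_double //.
exists t; move: Qt; rewrite hornerM hornerX horner_comp hornerZ hornerXn.
by rewrite -mulrA => ->; rewrite divff ?pnatr_eq0.
Qed.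

End RealClosedPolynomials.

Section QuaternionAlgebra.
Variable R : realType.
Local Notation H := (quat R).

Local Ltac quat_ring :=
  rewrite /qadd /qopp /qmul /qscale /qzero /qone; congr Quat; rewrite /=; ring.

Definition quat_tuple (x : H) := (q0 x, q1 x, q2 x, q3 x).
Definition tuple_quat (t : R * R * R * R) :=
  let: (a, b, c, d) := t in Quat a b c d.
Lemma quat_tupleK : cancel quat_tuple tuple_quat. Proof. by case. Qed.
HB.instance Definition _ := Choice.copy H (can_type quat_tupleK).

Fact qaddA : associative (@qadd R).
Proof. by move=> [? ? ? ?] [? ? ? ?] [? ? ? ?]; quat_ring. Qed.
Fact qaddC : commutative (@qadd R).
Proof. by move=> [? ? ? ?] [? ? ? ?]; quat_ring. Qed.
Fact qadd0r : left_id (qzero R) (@qadd R).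
Proof. by move=> [? ? ? ?]; quat_ring. Qed.
Fact qaddNr : left_inverse (qzero R) (@qopp R) (@qadd R).
Proof. by move=> [? ? ? ?]; quat_ring. Qed.
HB.instance Definition _ := GRing.isZmodule.Build H qaddA qaddC qadd0r qaddNr.

Fact qmulA : associative (@qmul R).
Proof. by move=> [? ? ? ?] [? ? ? ?] [? ? ? ?]; quat_ring. Qed.
Fact qmul1r : left_id (qone R) (@qmul R).
Proof. by move=> [? ? ? ?]; quat_ring. Qed.
Fact qmulr1 : right_id (qone R) (@qmul R).
Proof. by move=> [? ? ? ?]; quat_ring. Qed.
Fact qmulDl : left_distributive (@qmul R) +%R.
Proof. by move=> [? ? ? ?] [? ? ? ?] [? ? ? ?]; quat_ring. Qed.
Fact qmulDr : right_distributive (@qmul R) +%R.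
Proof. by move=> [? ? ? ?] [? ? ? ?] [? ? ? ?]; quat_ring. Qed.
Fact qone_neq0 : qone R != 0.
Proof. by apply/eqP => -[/eqP]; rewrite oner_eq0. Qed.
HB.instance Definition _ :=
  GRing.Zmodule_isNzRing.Build H qmulA qmul1r qmulr1 qmulDl qmulDr qone_neq0.

Fact qscaleA a b (x : H) : qscale a (qscale b x) = qscale (a * b) x.
Proof. by case: x => ? ? ? ?; quat_ring. Qed.
Fact qscale1r : left_id 1 (@qscale R).
Proof. by move=> [? ? ? ?]; quat_ring. Qed.
Fact qscaleDr : right_distributive (@qscale R) +%R.
Proof. by move=> ? [? ? ? ?] [? ? ? ?]; quat_ring. Qed.
Fact qscaleDl (x : H) : {morph (@qscale R)^~ x : a b / a + b}.
Proof. by case: x => ? ? ? ? ? ?; quat_ring. Qed.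
HB.instance Definition _ :=
  GRing.Zmodule_isLmodule.Build R H qscaleA qscale1r qscaleDr qscaleDl.

Fact qscaleAl a (x y : H) : a *: (x * y) = (a *: x) * y.
Proof. by case: x y => ? ? ? ? [? ? ? ?]; quat_ring. Qed.
HB.instance Definition _ := GRing.Lmodule_isLalgebra.Build R H qscaleAl.
Fact qscaleAr a (x y : H) : a *: (x * y) = x * (a *: y).
Proof. by case: x y => ? ? ? ? [? ? ? ?]; quat_ring. Qed.
HB.instance Definition _ := GRing.Lalgebra_isAlgebra.Build R H qscaleAr.

Lemma qsubE (x y : H) : qsub x y = x - y. Proof. by []. Qed.

Lemma qmulE (x y : H) : qmul x y = x * y. Proof. by []. Qed.

Lemma qpowE (x : H) n : qpow x n = x ^+ n.
Proof. by elim: n => [|n IH] //=; rewrite exprS IH. Qed.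

Lemma qevalE p (x : H) : qeval p x = horner_alg x p.
Proof.
rewrite /qeval foldrE big_map -{1}[size p]subn0 -/(index_iota 0 _) big_mkord.
change (\sum_(i < size p) qscale p`_i (qpow x i) = horner_alg x p).
by rewrite horner_algE; apply: eq_bigr => i _; rewrite qpowE.
Qed.

End QuaternionAlgebra.

Section PureQuaternions.
Variable R : realType.
Local Notation H := (quat R).
Implicit Types (a u x q : H).

Definition pure x := q0 x = 0.

Definition qdot x y := q1 x * q1 y + q2 x * q2 y + q3 x * q3 y.

Lemma pure_scale (c : R) x : pure x -> pure (c *: x).
Proof. by rewrite /pure /= => ->; rewrite mulr0. Qed.

Lemma q0_mul x y : q0 (x * y) = q0 x * q0 y - qdot x y.
Proof. by rewrite /qdot /=; ring. Qed.

Lemma pure_mul_orth a q : pure a -> qdot a q = 0 -> pure (a * q).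
Proof. by rewrite /pure q0_mul => -> ->; rewrite mul0r subr0. Qed.

Lemma pure_mul_sqr a : pure a -> a * a = (- qdot a a)%:A.
Proof.
by case: a => ? ? ? ?; rewrite /pure => /= ->; congr Quat; rewrite /qdot /=; ring.
Qed.

Lemma pure_mul_anticomm a u :
  pure a -> pure u -> a * u + u * a = (- 2 * qdot a u)%:A.
Proof.
case: a u => ? ? ? ? [? ? ? ?]; rewrite /pure /= => -> ->.
by congr Quat; rewrite /qdot /=; ring.
Qed.

Lemma pure_orth_anticomm a u :
  pure a -> pure u -> qdot a u = 0 -> u * a = - (a * u).
Proof.
move=> pa pu au; apply/eqP; rewrite -addr_eq0 addrC pure_mul_anticomm //.
by rewrite au mulr0 scale0r.
Qed.

Lemma pure_qdot_eq0 u : pure u -> qdot u u = 0 -> u = 0.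
Proof.
case: u => ? u1 u2 u3; rewrite /pure /qdot /= => -> /eqP.
rewrite -!expr2 !paddr_eq0 ?addr_ge0 ?sqr_ge0 // !sqrf_eq0.
by case/andP=> /andP[/eqP-> /eqP->] /eqP->.
Qed.

Lemma exists_pure_orth u : exists a, [/\ pure a, qdot a u = 0 & qdot a a != 0].
Proof.
case: u => u0 u1 u2 u3; rewrite /qdot /=.
have [u12|] := boolP ((u1 != 0) || (u2 != 0)).
  exists (Quat 0 u2 (- u1) 0); split => //=; first by ring.
  rewrite mul0r addr0 mulrNN addrC -!expr2 paddr_eq0 ?sqr_ge0 // !sqrf_eq0.
  by rewrite negb_and.
rewrite negb_or !negbK => /andP[/eqP-> _].
exists (Quat 0 1 0 0).
by split => //=; rewrite ?mulr0 ?mul1r ?mul0r ?addr0 ?oner_eq0.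
Qed.

Definition pure_inv a := (- (qdot a a)^-1) *: a.

Section PureInverse.
Variable a : H.
Hypotheses (pa : pure a) (aa : qdot a a != 0).

Lemma pure_mulV : a * pure_inv a = 1.
Proof. by rewrite -scalerAr pure_mul_sqr // scalerA mulrNN mulVf ?scale1r. Qed.

Lemma pure_mulVr : pure_inv a * a = 1.
Proof. by rewrite -scalerAl pure_mul_sqr // scalerA mulrNN mulVf ?scale1r. Qed.

End PureInverse.

Lemma exists_mul_swap (s : R) u : pure u ->
  exists a b, a * b = s%:A + u /\ b * a = s%:A - u.
Proof.
move=> pu; have [a [pa au aa]] := exists_pure_orth u.
exists a, (pure_inv a * (s%:A + u)); split.
  by rewrite mulrA pure_mulV ?mul1r.
rewrite -mulrA; have -> : (s%:A + u) * a = a * (s%:A - u).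
  by rewrite mulrDl mulrBr mulr_algl mulr_algr (pure_orth_anticomm pa).
by rewrite mulrA pure_mulVr ?mul1r.
Qed.

Lemma exists_pure_factors q : exists x y, [/\ pure x, pure y & q = x * y].
Proof.
have [a [pa aq aa]] := exists_pure_orth q.
exists a, (pure_inv a * q); split => //; last by rewrite mulrA pure_mulV ?mul1r.
by rewrite -scalerAl; apply/pure_scale/pure_mul_orth.
Qed.

End PureQuaternions.

Lemma pure_in_pcomm (R : realType) (p : {poly R}) (u : quat R) :
  (1 < size p)%N -> pure u -> in_pcomm p u.
Proof.
move=> p_nc pu; have [->|u0] := eqVneq u 0.
  by exists 0, 0; rewrite qsubE subrr.
have uu : - qdot u u != 0.
  by rewrite oppr_eq0; apply: contra_neq u0; apply: pure_qdot_eq0.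
have [s odd_p0] := exists_shift_odd_poly_neq0 p_nc.
have [t ht] := exists_mulX_comp_sqr_eq1 odd_p0 uu.
have [a [b [ab ba]]] := exists_mul_swap s (pure_scale t pu).
have zz : (t *: u) * (t *: u) = (- qdot u u * t ^+ 2)%:A.
  by rewrite -scalerAl -scalerAr pure_mul_sqr // !scalerA mulrC expr2.
exists a, b; rewrite qsubE !qevalE !qmulE ab ba.
by rewrite !horner_alg_shift (horner_alg_subN _ zz) scalerA ht scale1r.
Qed.

Theorem theorem2p14 (R : realType) (p : {poly R}) (hp : (1 < size p)%N)
  (q : quat R) :
  exists x y : quat R, in_pcomm p x /\ in_pcomm p y /\ q = qmul x y.
Proof.
have [x [y [px py ->]]] := exists_pure_factors q.
exists x, y; split; first exact: pure_in_pcomm.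
by split; first exact: pure_in_pcomm.
Qed.
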